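(* Given a growth control function $g$, a strictly increasing sequence of integers $(p_j)_{j\in\mathbb{N}_0}$ with $p_0=0$ and $\sup_{j\in\mathbb{N}}p_{j+1}/p_j=+\infty$, and $\beta\ge0$, there exists a weight sequence $\boldsymbol{M}^\beta=(M^\beta_p)_p$ with quotients $m^\beta_p=M^\beta_{p+1}/M^\beta_p$ such that: (i) $m^\beta_p\le g(p)(1+p)^\beta$ for all $p\in\mathbb{N}_0$; (ii) $m^\beta_{p_j}=g(p_j)(1+p_j)^\beta$ for all $j\in\mathbb{N}_0$; (iii) $\gamma(\boldsymbol{M}^\beta)=\beta$.
   Context: A growth control function is a strictly increasing function $g\colon[0,\infty)\to[1,\infty)$ with $g(0)=1$ and $\lim_{t\to\infty}g(t)=\infty$. A weight sequence is a sequence $\boldsymbol{M}=(M_p)_{p\in\mathbb{N}_0}$ of positive reals with $M_0=1$, $M_p^2\le M_{p-1}M_{p+1}$ ($p\ge1$) and $m_p=M_{p+1}/M_p\to\infty$. A sequence $(c_p)$ is almost increasing if $c_p\le ac_q$ for all $q\ge p$, some $a>0$; $\gamma(\boldsymbol{M})=\sup\{\mu>0:(m_p/(p+1)^\mu)_p\text{ almost increasing}\}\in[0,\infty]$ (value $0$ for the empty set). *)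

From Stdlib Require Import Reals.
Open Scope R_scope.

(* Growth control function g : [0,oo) -> [1,oo), strictly increasing,
   g(0) = 1, g(t) -> +oo.  Only its values on [0,oo) matter. *)
Definition growth_control (g : R -> R) : Prop :=
  (forall t, 0 <= t -> 1 <= g t) /\
  (forall s t, 0 <= s -> s < t -> g s < g t) /\
  g 0 = 1 /\
  (forall A, exists T, 0 <= T /\ forall t, T <= t -> A < g t).

Definition quot (M : nat -> R) (p : nat) : R := M (S p) / M p.

Definition weight_sequence (M : nat -> R) : Prop :=
  (forall p, 0 < M p) /\
  M 0%nat = 1 /\
  (forall p, (1 <= p)%nat -> M p ^ 2 <= M (p - 1)%nat * M (S p)) /\
  (forall A, exists N, forall p, (N <= p)%nat -> A < quot M p).

Definition almost_increasing (c : nat -> R) : Prop :=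
  exists a, 0 < a /\ forall p q, (p <= q)%nat -> c p <= a * c q.

(* The set whose supremum is gamma(M) *)
Definition gamma_set (M : nat -> R) (mu : R) : Prop :=
  0 < mu /\ almost_increasing (fun p => quot M p / Rpower (INR p + 1) mu).

(* gamma(M) = b  (for a finite real b), with sup of the empty set being 0:
   b is the least upper bound of gamma_set M among nonnegative reals. *)
Definition gamma_eq (M : nat -> R) (b : R) : Prop :=
  0 <= b /\
  (forall mu, gamma_set M mu -> mu <= b) /\
  (forall c, 0 <= c -> (forall mu, gamma_set M mu -> mu <= c) -> b <= c).

From Stdlib Require Import Reals Lra Lia.
Open Scope R_scope.

(* Cut [N] into the blocks [pj j <= p < pj (S j)] and let [m_p = g(pj j) (1+p)^beta]
   on each block, [M] being the product of the [m_p].  Since [m] is nondecreasing and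
   unbounded, [M] is a weight sequence; [m_p <= g(p) (1+p)^beta] with equality at the
   block starts.  Dividing by [(1+p)^beta] leaves [g(pj j)], which is nondecreasing,
   so [gamma(M) >= beta].  Dividing instead by [(1+p)^mu] with [mu > beta], the ratio
   between the first and the last index of block [j] is [(pj (S j) / (pj j + 1))^(mu-beta)],
   which is unbounded because [pj (S j) / pj j] is, so [gamma(M) <= beta]. *)

Section Blocks.

Variable pj : nat -> nat.

(* The [j] with [pj j <= p < pj (S j)], see [block_index_spec]. *)
Fixpoint block_index (p : nat) : nat :=
  match p with
  | O => O
  | S p' =>
      if Nat.leb (pj (S (block_index p'))) (S p') then S (block_index p')
      else block_index p'
  end.

Definition block_start (p : nat) : nat := pj (block_index p).

Lemma block_index_mono p p' : (p <= p')%nat -> (block_index p <= block_index p')%nat.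
Proof.
  induction 1 as [|p' _ IH]; [lia|].
  cbn [block_index]. destruct (Nat.leb _ _); lia.
Qed.

Hypothesis pj_incr : forall j, (pj j < pj (S j))%nat.

Lemma pj_le_mono a b : (a <= b)%nat -> (pj a <= pj b)%nat.
Proof. induction 1 as [|b _ IH]; [lia|]. specialize (pj_incr b). lia. Qed.

Lemma pj_ge_id j : (j <= pj j)%nat.
Proof. induction j as [|j IH]; [lia|]. specialize (pj_incr j). lia. Qed.

Hypothesis pj0 : pj 0%nat = 0%nat.

Lemma block_index_spec p : (pj (block_index p) <= p < pj (S (block_index p)))%nat.
Proof.
  induction p as [|p IH]; cbn [block_index].
  - rewrite pj0. specialize (pj_incr 0). lia.
  - destruct (Nat.leb_spec (pj (S (block_index p))) (S p)); [|lia].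
    specialize (pj_incr (S (block_index p))). lia.
Qed.

Lemma block_index_eq j p : (pj j <= p < pj (S j))%nat -> block_index p = j.
Proof.
  intros Hp. destruct (block_index_spec p) as [Hlo Hhi].
  destruct (Nat.lt_trichotomy (block_index p) j) as [Hlt|[Heq|Hgt]]; [|exact Heq|].
  - pose proof (pj_le_mono _ _ Hlt). lia.
  - pose proof (pj_le_mono _ _ Hgt). lia.
Qed.

Lemma block_start_le p : (block_start p <= p)%nat.
Proof. apply block_index_spec. Qed.

Lemma block_start_mono p p' : (p <= p')%nat -> (block_start p <= block_start p')%nat.
Proof. intros Hp. apply pj_le_mono, block_index_mono, Hp. Qed.

Lemma block_start_pj j : block_start (pj j) = pj j.
Proof.
  unfold block_start. rewrite (block_index_eq j); [reflexivity|].
  specialize (pj_incr j). lia.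
Qed.

Lemma block_start_ge j p : (pj j <= p)%nat -> (pj j <= block_start p)%nat.
Proof. intros Hp. rewrite <- block_start_pj. apply block_start_mono, Hp. Qed.

Lemma block_start_last j : block_start (pj (S j) - 1) = pj j.
Proof.
  unfold block_start. rewrite (block_index_eq j); [reflexivity|].
  specialize (pj_incr j). lia.
Qed.

Hypothesis pj_gaps :
  forall C, exists j, (1 <= j)%nat /\ C < INR (pj (S j)) / INR (pj j).

Lemma long_blocks K :
  0 < K ->
  exists p q, (p <= q)%nat /\ block_start p = block_start q /\
              K * (INR p + 1) < INR q + 1.
Proof.
  intros HK. destruct (pj_gaps (2 * K)) as [j [Hj Hgap]].
  pose proof (pj_ge_id j) as Hpj1. pose proof (pj_incr j) as Hpj2.
  exists (pj j), (pj (S j) - 1)%nat.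
  split; [lia|]. split; [rewrite block_start_pj, block_start_last; reflexivity|].
  rewrite minus_INR by lia.
  assert (H1 : 1 <= INR (pj j)) by (apply (le_INR 1); lia).
  apply (Rmult_lt_compat_r (INR (pj j))) in Hgap; [|lra].
  replace (INR (pj (S j)) / INR (pj j) * INR (pj j)) with (INR (pj (S j))) in Hgap
    by (field; lra).
  simpl INR. nra.
Qed.

End Blocks.

Fixpoint prod_seq (m : nat -> R) (p : nat) : R :=
  match p with
  | O => 1
  | S p' => prod_seq m p' * m p'
  end.

Section ProductSequence.

Variable m : nat -> R.
Hypothesis m_pos : forall p, 0 < m p.

Lemma prod_seq_pos p : 0 < prod_seq m p.
Proof. induction p as [|p IH]; simpl; [lra|]. now apply Rmult_lt_0_compat. Qed.

Lemma quot_prod_seq p : quot (prod_seq m) p = m p.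
Proof. unfold quot; simpl. pose proof (prod_seq_pos p). field; lra. Qed.

Hypothesis m_nondecr : forall p, m p <= m (S p).
Hypothesis m_unbounded : forall A, exists N, forall p, (N <= p)%nat -> A < m p.

Lemma weight_sequence_prod_seq : weight_sequence (prod_seq m).
Proof.
  split; [exact prod_seq_pos|]. split; [reflexivity|]. split.
  - intros [|p] Hp; [lia|]. replace (S p - 1)%nat with p by lia. simpl.
    pose proof (prod_seq_pos p). pose proof (m_pos p). pose proof (m_nondecr p).
    assert (0 <= prod_seq m p * prod_seq m p * m p) by (apply Rmult_le_pos; nra).
    nra.
  - intros A. destruct (m_unbounded A) as [N HN]. exists N. intros p Hp.
    rewrite quot_prod_seq. now apply HN.
Qed.

End ProductSequence.

Lemma Rpower_pos x y : 0 < Rpower x y.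
Proof. apply exp_pos. Qed.

Lemma nondecreasing_almost_increasing (c : nat -> R) :
  (forall p, c p <= c (S p)) -> almost_increasing c.
Proof.
  intros Hc. exists 1. split; [lra|]. intros p q Hpq.
  rewrite Rmult_1_l. now apply Rge_le, growing_prop.
Qed.

Lemma gamma_eq_intro (M : nat -> R) (beta : R) :
  0 <= beta ->
  (forall mu, gamma_set M mu -> mu <= beta) ->
  (0 < beta -> gamma_set M beta) ->
  gamma_eq M beta.
Proof.
  intros Hbeta Hub Hin. split; [exact Hbeta|]. split; [exact Hub|].
  intros c Hc Hc_ub. destruct (Rle_lt_or_eq_dec _ _ Hbeta) as [Hpos|<-]; [|exact Hc].
  now apply Hc_ub, Hin.
Qed.

Lemma gamma_set_le (M h : nat -> R) (beta mu : R) :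
  (forall p, 0 < h p) ->
  (forall p, quot M p = h p * Rpower (1 + INR p) beta) ->
  (forall K, 0 < K -> exists p q, (p <= q)%nat /\ h p = h q /\
                                  K * (INR p + 1) < INR q + 1) ->
  gamma_set M mu -> mu <= beta.
Proof.
  intros Hh Hquot Hgaps [_ [a [Ha Hai]]].
  apply Rnot_lt_le. intros Hlt. set (d := mu - beta).
  assert (Hd : 0 < d) by (unfold d; lra).
  assert (Hsplit : forall x, Rpower x mu = Rpower x beta * Rpower x d).
  { intros x. rewrite <- Rpower_plus. f_equal. unfold d. ring. }
  destruct (Hgaps (Rpower a (/ d)) (Rpower_pos _ _)) as [p [q [Hpq [Hhpq Hgap]]]].
  specialize (Hai p q Hpq). rewrite !Hquot, !Hsplit, <- Hhpq, !(Rplus_comm 1) in Hai.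
  set (Xp := INR p + 1) in *. set (Xq := INR q + 1) in *.
  assert (HXp : 0 < Xp) by (unfold Xp; pose proof (pos_INR p); lra).
  assert (HXq : 0 < Xq) by (unfold Xq; pose proof (pos_INR q); lra).
  assert (Hle : Rpower Xq d <= a * Rpower Xp d).
  { pose proof (Hh p). pose proof (Rpower_pos Xp beta). pose proof (Rpower_pos Xq beta).
    pose proof (Rpower_pos Xp d). pose proof (Rpower_pos Xq d).
    replace (h p * Rpower Xp beta / (Rpower Xp beta * Rpower Xp d))
      with (h p / Rpower Xp d) in Hai by (field; lra).
    replace (h p * Rpower Xq beta / (Rpower Xq beta * Rpower Xq d))
      with (h p / Rpower Xq d) in Hai by (field; lra).
    apply (Rmult_le_compat_r (Rpower Xp d * Rpower Xq d / h p)) in Hai;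
      [|apply Rlt_le, Rdiv_lt_0_compat; [apply Rmult_lt_0_compat|]; lra].
    replace (h p / Rpower Xp d * (Rpower Xp d * Rpower Xq d / h p))
      with (Rpower Xq d) in Hai by (field; lra).
    replace (a * (h p / Rpower Xq d) * (Rpower Xp d * Rpower Xq d / h p))
      with (a * Rpower Xp d) in Hai by (field; lra).
    exact Hai. }
  assert (Hlt' : a * Rpower Xp d < Rpower Xq d).
  { replace a with (Rpower (Rpower a (/ d)) d)
      by (rewrite Rpower_mult, Rinv_l, Rpower_1; lra).
    rewrite Rpower_mult_distr by (apply Rpower_pos || lra).
    apply Rlt_Rpower_l; [lra|]. split; [|exact Hgap].
    apply Rmult_lt_0_compat; [apply Rpower_pos|lra]. }
  lra.
Qed.

Section Construction.

Variables (g : R -> R) (pj : nat -> nat) (beta : R).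
Hypothesis g_ge1 : forall t, 0 <= t -> 1 <= g t.
Hypothesis g_incr : forall s t, 0 <= s -> s < t -> g s < g t.
Hypothesis g_unbounded : forall A, exists T, 0 <= T /\ forall t, T <= t -> A < g t.
Hypothesis pj0 : pj 0%nat = 0%nat.
Hypothesis pj_incr : forall j, (pj j < pj (S j))%nat.
Hypothesis beta_ge0 : 0 <= beta.

Lemma g_le s t : 0 <= s -> s <= t -> g s <= g t.
Proof.
  intros Hs [Hst|<-]; [|lra]. left. now apply g_incr.
Qed.

Definition g_block (p : nat) : R := g (INR (block_start pj p)).

Definition quot_beta (p : nat) : R := g_block p * Rpower (1 + INR p) beta.

Lemma g_block_ge1 p : 1 <= g_block p.
Proof. apply g_ge1, pos_INR. Qed.

Lemma g_block_mono p p' : (p <= p')%nat -> g_block p <= g_block p'.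
Proof. intros Hp. apply g_le; [apply pos_INR|]. now apply le_INR, block_start_mono. Qed.

Lemma Rpower_beta_ge1 p : 1 <= Rpower (1 + INR p) beta.
Proof.
  rewrite <- (Rpower_O (1 + INR p)) at 1 by (pose proof (pos_INR p); lra).
  apply Rle_Rpower; [pose proof (pos_INR p); lra | exact beta_ge0].
Qed.

Lemma quot_beta_ge1 p : 1 <= quot_beta p.
Proof.
  pose proof (g_block_ge1 p). pose proof (Rpower_beta_ge1 p). unfold quot_beta. nra.
Qed.

Lemma quot_beta_pos p : 0 < quot_beta p.
Proof. pose proof (quot_beta_ge1 p). lra. Qed.

Lemma quot_beta_nondecr p : quot_beta p <= quot_beta (S p).
Proof.
  unfold quot_beta. apply Rmult_le_compat.
  - pose proof (g_block_ge1 p). lra.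
  - apply Rlt_le, Rpower_pos.
  - apply g_block_mono. lia.
  - apply Rle_Rpower_l; [exact beta_ge0|]. rewrite S_INR. pose proof (pos_INR p). lra.
Qed.

Lemma quot_beta_unbounded A : exists N, forall p, (N <= p)%nat -> A < quot_beta p.
Proof.
  destruct (g_unbounded A) as [T [_ HT]]. destruct (INR_unbounded T) as [j Hj].
  exists (pj j). intros p Hp.
  assert (HgA : A < g_block p).
  { apply HT. pose proof (le_INR _ _ (pj_ge_id pj pj_incr j)).
    pose proof (le_INR _ _ (block_start_ge pj pj_incr pj0 j p Hp)). lra. }
  pose proof (g_block_ge1 p). pose proof (Rpower_beta_ge1 p). unfold quot_beta. nra.
Qed.

Lemma quot_beta_le p : quot_beta p <= g (INR p) * Rpower (1 + INR p) beta.
Proof.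
  apply Rmult_le_compat_r; [apply Rlt_le, Rpower_pos|].
  apply g_le; [apply pos_INR|]. now apply le_INR, (block_start_le pj pj_incr pj0).
Qed.

Lemma quot_beta_pj j : quot_beta (pj j) = g (INR (pj j)) * Rpower (1 + INR (pj j)) beta.
Proof. unfold quot_beta, g_block. now rewrite block_start_pj. Qed.

Lemma quot_beta_div_Rpower p : quot_beta p / Rpower (INR p + 1) beta = g_block p.
Proof.
  unfold quot_beta. rewrite (Rplus_comm (INR p) 1).
  pose proof (Rpower_pos (1 + INR p) beta). field. lra.
Qed.

Lemma gamma_set_beta : 0 < beta -> gamma_set (prod_seq quot_beta) beta.
Proof.
  intros Hbeta. split; [exact Hbeta|].
  apply nondecreasing_almost_increasing. intros p.
  rewrite !quot_prod_seq, !quot_beta_div_Rpower by exact quot_beta_pos.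
  apply g_block_mono. lia.
Qed.

Hypothesis pj_gaps :
  forall C, exists j, (1 <= j)%nat /\ C < INR (pj (S j)) / INR (pj j).

Lemma gamma_eq_beta : gamma_eq (prod_seq quot_beta) beta.
Proof.
  apply gamma_eq_intro; [exact beta_ge0| |exact gamma_set_beta].
  intros mu. apply (gamma_set_le _ g_block).
  - intros p. pose proof (g_block_ge1 p). lra.
  - intros p. apply quot_prod_seq, quot_beta_pos.
  - intros K HK. destruct (long_blocks pj pj_incr pj0 pj_gaps K HK) as [p [q [Hpq [Heq Hgap]]]].
    exists p, q. unfold g_block. now rewrite Heq.
Qed.

End Construction.

Theorem theorem4p10 (g : R -> R) (pj : nat -> nat) (beta : R) :
  growth_control g ->
  pj 0%nat = 0%nat ->
  (forall j, (pj j < pj (S j))%nat) ->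
  (forall C, exists j, (1 <= j)%nat /\ C < INR (pj (S j)) / INR (pj j)) ->
  0 <= beta ->
  exists M : nat -> R,
    weight_sequence M /\
    (forall p, quot M p <= g (INR p) * Rpower (1 + INR p) beta) /\
    (forall j, quot M (pj j) = g (INR (pj j)) * Rpower (1 + INR (pj j)) beta) /\
    gamma_eq M beta.
Proof.
  intros [g_ge1 [g_incr [_ g_unbounded]]] pj0 pj_incr pj_gaps beta_ge0.
  set (m := quot_beta g pj beta).
  assert (m_pos : forall p, 0 < m p) by (intros p; now apply quot_beta_pos).
  exists (prod_seq m). split; [|split; [|split]].
  - apply weight_sequence_prod_seq; [exact m_pos| |].
    + intros p. now apply quot_beta_nondecr.
    + now apply quot_beta_unbounded.
  - intros p. rewrite quot_prod_seq by exact m_pos. now apply quot_beta_le.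
  - intros j. rewrite quot_prod_seq by exact m_pos. now apply quot_beta_pj.
  - now apply gamma_eq_beta.
Qed.
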